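(* Let $N\geq 1$ be an integer and let $\mathrm{Mat}_2(\mathbb{Z},N)$ denote the set of $2\times 2$ matrices with entries in $[-N,N]\cap\mathbb{Z}$. Write \[ A=\begin{pmatrix} a_1 & a_2\\ a_3 & a_4\end{pmatrix},\qquad B=\begin{pmatrix} b_1 & b_2\\ b_3 & b_4\end{pmatrix}, \] and set \[ \Gamma=\{(A,B)\in\mathrm{Mat}_2(\mathbb{Z},N)^2 : AB=BA\},\qquad \Gamma'=\{(A,B)\in\Gamma : a_2b_2a_3b_3\neq 0\}. \] Then \[ |\Gamma\setminus\Gamma'| = 2(2N)^5 + O(N^4\log N). \]
   Context: The implied constant in the $O$-term is absolute. The set $\Gamma\setminus\Gamma'$ consists of the commuting pairs of $2\times 2$ integer matrices with entries bounded by $N$ in absolute value for which at least one of the off-diagonal entries $a_2,a_3,b_2,b_3$ vanishes. *)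

From HB Require Import structures.
From mathcomp Require Import all_boot all_order all_algebra.
Set Implicit Arguments. Unset Strict Implicit. Unset Printing Implicit Defensive.
Import GRing.Theory Num.Theory.
Local Open Scope ring_scope.

(* An index i : 'I_(2N+1) encodes the integer i - N, so 'I_(2N+1) is in
   bijection with [-N, N] ∩ Z. *)
Definition ent (N : nat) (i : 'I_(2 * N + 1)) : int := (i : nat)%:Z - N%:Z.

Definition toZ (N : nat) (M : 'M['I_(2 * N + 1)]_2) : 'M[int]_2 :=
  \matrix_(i, j) ent (M i j).

(* a_1 = A 0 0, a_2 = A 0 1, a_3 = A 1 0, a_4 = A 1 1. *)
Definition i0 : 'I_2 := ord0.
Definition i1 : 'I_2 := ord_max.

Definition GammaMinusGammaP (N : nat) :
  {set 'M['I_(2 * N + 1)]_2 * 'M['I_(2 * N + 1)]_2} :=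
  [set p | let A := toZ p.1 in let B := toZ p.2 in
           (A *m B == B *m A) && (A i0 i1 * B i0 i1 * A i1 i0 * B i1 i0 == 0)].

Definition card_GammaMinusGammaP (N : nat) : nat := #|GammaMinusGammaP N|.

(* For 2x2 matrices, AB = BA amounts to
     a2 b3 = a3 b2,   b2 d = a2 e,   a3 e = b3 d,   where d = a1 - a4, e = b1 - b4.
   If moreover a2 b2 a3 b3 = 0, these relations force A or B to be scalar, or
   a2 = b2 = 0, or a3 = b3 = 0.  Pairs with a scalar member number
   2(2N+1)^5 - (2N+1)^2, which gives the main term.  A pair with a2 = b2 = 0 is
   determined by a4, b4 and the integer quadruple (a3, b3, d, e) in [-2N, 2N]^4, which
   satisfies a3 e = b3 d.  Up to signs, the solutions of x w = y z in [0, M]^4 with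
   (x, y) <> (0, 0) are the (g a, g b, a t, b t) with g, t <= M / max(a, b), so there
   are at most (M+1)^2 + sum_(m <= M) (2m+1) (M/m + 1)^2 = O(M^2 log M) of them, and the
   pairs with a2 = b2 = 0 or a3 = b3 = 0 contribute O(N^4 log N). *)

From Stdlib Require Import Reals Lra.
From Coquelicot Require Rcomplements.
From mathcomp Require all_boot all_algebra zify ring.

(* Kept in modules so that the ssrnat notations imported there do not change the
   meaning of [(_ <= _)%nat] in the statement of [proposition2p3]. *)
Module Counting.
Import all_boot all_algebra zify ring.
Set Implicit Arguments. Unset Strict Implicit. Unset Printing Implicit Defensive.
Import GRing.Theory Num.Theory.

Lemma sum_maxn (F : nat -> nat) n :
  \sum_(a < n) \sum_(b < n) F (maxn a b) = \sum_(m < n) (2 * m + 1) * F m.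
Proof.
elim: n => [|n IH]; first by rewrite !big_ord0.
have sum_const (G : 'I_n -> nat) : (forall i, G i = F n) -> \sum_(i < n) G i = n * F n.
  by move=> GE; rewrite (eq_bigr _ (fun i _ => GE i)) sum_nat_const card_ord.
rewrite big_ord_recr /= big_ord_recr /=.
under eq_bigr => a _ do rewrite big_ord_recr /=.
rewrite big_split /= IH maxnn big_ord_recr /=.
rewrite [\sum_(i < n) F (maxn i n)]sum_const => [|i]; last first.
  by rewrite (maxn_idPr (ltnW (ltn_ord i))).
rewrite [\sum_(i < n) F (maxn n i)]sum_const => [|i]; last first.
  by rewrite (maxn_idPl (ltnW (ltn_ord i))).
lia.
Qed.

Lemma sum_ord_leq n k : \sum_(g < n) (g <= k : nat) = minn n k.+1.
Proof.
elim: n => [|n IH]; first by rewrite big_ord0 min0n.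
by rewrite big_ord_recr /= IH; case: (leqP n k) => /=; lia.
Qed.

Lemma proportional_factor (x y z w : nat) : x * w = y * z -> 0 < maxn x y ->
  exists a b g t, [/\ x = g * a, y = g * b, z = a * t & w = b * t].
Proof.
move=> xw_yz xy_gt0.
have g_gt0 : 0 < gcdn x y by rewrite gcdn_gt0 -leq_max.
set g := gcdn x y in g_gt0.
have [a xE] : exists a, x = g * a by exists (x %/ g); rewrite mulnC divnK // dvdn_gcdl.
have [b yE] : exists b, y = g * b by exists (y %/ g); rewrite mulnC divnK // dvdn_gcdr.
have ab_coprime : coprime a b.
  by rewrite /coprime -(eqn_pmul2l g_gt0) muln_gcdr -xE -yE muln1.
have aw_bz : a * w = b * z.
  by apply/eqP; rewrite -(eqn_pmul2l g_gt0) !mulnA -xE -yE xw_yz.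
exists a, b, g.
have [a0 | a_gt0] := posnP a.
  have b1 : b = 1 by apply/eqP; move: ab_coprime; rewrite a0 /coprime gcd0n.
  exists w; split=> //; last by rewrite b1 mul1n.
  by move: aw_bz; rewrite a0 b1 mul0n mul1n.
have /dvdnP[t zE] : a %| z by rewrite -(Gauss_dvdr z ab_coprime) -aw_bz dvdn_mulr.
exists t; split=> //; first by rewrite zE mulnC.
by apply/eqP; rewrite -(eqn_pmul2l a_gt0) aw_bz zE; apply/eqP; ring.
Qed.

Lemma sum_pair (I J : finType) (G : I * J -> nat) :
  \sum_(p : I * J) G p = \sum_(i : I) \sum_(j : J) G (i, j).
Proof. by rewrite pair_bigA; apply: eq_bigr => -[]. Qed.

Local Notation quad M := ('I_M.+1 * 'I_M.+1 * 'I_M.+1 * 'I_M.+1)%type.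

Definition proportional_quads M : {set quad M} :=
  [set q : quad M | let: (x, y, z, w) := q in x * w == y * z :> nat].

(* For [a = b = 0], [M %/ 0 = 0] leaves only [g = t = 0]. *)
Definition param_box M : {set quad M} :=
  [set q : quad M | let: (a, b, g, t) := q in (g <= M %/ maxn a b) && (t <= M %/ maxn a b)].

Definition scale_quad M (q : quad M) : quad M :=
  let: (a, b, g, t) := q in (inord (g * a), inord (g * b), inord (a * t), inord (b * t)).

Definition box_sum M := \sum_(m < M.+1) (2 * m + 1) * (M %/ m).+1 ^ 2.

Lemma card_param_box M : #|param_box M| = box_sum M.
Proof.
rewrite -sum1_card big_mkcond /= !sum_pair /box_sum -(sum_maxn (fun m => (M %/ m).+1 ^ 2)).
apply: eq_bigr => a _; apply: eq_bigr => b _.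
set k := M %/ maxn a b.
have k_le : k < M.+1 by rewrite ltnS leq_div.
rewrite (eq_bigr (fun g : 'I_M.+1 => (g <= k : nat) * \sum_(t < M.+1) (t <= k : nat))).
  by rewrite -big_distrl /= sum_ord_leq (minn_idPr k_le) mulnn.
move=> g _; rewrite big_distrr /=; apply: eq_bigr => t _.
by rewrite inE; case: (g <= k); case: (t <= k).
Qed.

Definition zero_head_quads M : {set quad M} :=
  setX (setX (setX [set ord0] [set ord0]) [set: 'I_M.+1]) [set: 'I_M.+1].

Lemma proportional_quads_sub M :
  proportional_quads M \subset zero_head_quads M :|: @scale_quad M @: param_box M.
Proof.
apply/subsetP => -[[[x y] z] w]; rewrite inE => /eqP xw_yz.
have [xy0 | xy_gt0] := posnP (maxn x y).
  apply/setUP; left; rewrite !inE !andbT.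
  by apply/andP; split; apply/eqP/val_inj; move: xy0 => /=; lia.
apply/setUP; right.
have [a [b [g [t [xE yE zE wE]]]]] := proportional_factor xw_yz xy_gt0.
have xyE : maxn x y = g * maxn a b by rewrite xE yE maxnMr.
have zwE : maxn z w = maxn a b * t by rewrite zE wE maxnMl.
have [g_gt0 m_gt0] : 0 < g /\ 0 < maxn a b.
  by apply/andP; rewrite -muln_gt0 -xyE.
have ord_le (i : 'I_M.+1) : i <= M by rewrite -ltnS.
have gm_le : g * maxn a b <= M by rewrite -xyE geq_max !ord_le.
have tm_le : t * maxn a b <= M by rewrite mulnC -zwE geq_max !ord_le.
have m_le : maxn a b <= M := leq_trans (leq_pmull _ g_gt0) gm_le.
have aM : a < M.+1 := leq_trans (leq_maxl a b) m_le.
have bM : b < M.+1 := leq_trans (leq_maxr a b) m_le.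
have gM : g < M.+1 := leq_trans (leq_pmulr g m_gt0) gm_le.
have tM : t < M.+1 := leq_trans (leq_pmulr t m_gt0) tm_le.
apply/imsetP; exists (inord a, inord b, inord g, inord t).
  by rewrite inE !inordK // !leq_divRL // gm_le tm_le.
by rewrite /= !inordK //; congr (_, _, _, _); apply/val_inj; rewrite /= inordK -?xE -?yE -?zE -?wE.
Qed.

Lemma card_proportional_quads M : #|proportional_quads M| <= M.+1 ^ 2 + box_sum M.
Proof.
apply: leq_trans (subset_leq_card (proportional_quads_sub M)) _.
apply: leq_trans (leq_card_setU _ _) _; apply: leq_add.
  by rewrite !cardsX !cards1 !cardsT card_ord !mul1n mulnn.
by rewrite -card_param_box leq_imset_card.
Qed.

Local Open Scope ring_scope.

Lemma ord2P (i : 'I_2) : i = i0 \/ i = i1.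
Proof. by case: i => -[|[|//]] i_lt; [left | right]; apply: val_inj. Qed.

Lemma mulmx2E (R : pzSemiRingType) (A B : 'M[R]_2) i j :
  (A *m B) i j = A i i0 * B i0 j + A i i1 * B i1 j.
Proof.
rewrite mxE !big_ord_recl big_ord0 addr0.
by have -> : lift ord0 (ord0 : 'I_1) = i1 by apply: val_inj.
Qed.

Lemma mx2_commE (R : comPzRingType) (A B : 'M[R]_2) :
  (A *m B == B *m A) =
  [&& A i0 i1 * B i1 i0 == A i1 i0 * B i0 i1,
      B i0 i1 * (A i0 i0 - A i1 i1) == A i0 i1 * (B i0 i0 - B i1 i1) &
      A i1 i0 * (B i0 i0 - B i1 i1) == B i1 i0 * (A i0 i0 - A i1 i1)].
Proof.
have sub_eq (u v x y : R) : u - v = x - y -> x = y -> u = v.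
  by move=> uvE xy; apply/subr0_eq; rewrite uvE xy subrr.
apply/eqP/and3P => [AB | [/eqP h1 /eqP h2 /eqP h3]].
  have E i j : (A *m B) i j = (B *m A) i j by rewrite AB.
  move: (E i0 i0) (E i0 i1) (E i1 i0); rewrite !mulmx2E => e00 e01 e10.
  by split; apply/eqP; [apply: sub_eq e00 | apply: sub_eq e01 | apply: sub_eq e10]; ring.
apply/matrixP => i j; rewrite !mulmx2E.
by case: (ord2P i) (ord2P j) => -> [] ->;
  [apply: sub_eq h1 | apply: sub_eq h2 | apply: sub_eq h3 | apply: sub_eq (esym h1)]; ring.
Qed.

Lemma commuting_offdiag_zero (R : idomainType) (a2 a3 d b2 b3 e : R) :
  a2 = 0 -> a2 * b3 = a3 * b2 -> b2 * d = a2 * e -> b2 = 0 \/ a3 = 0 /\ d = 0.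
Proof.
move=> -> h1 h2; have [-> | b2_neq0] := eqVneq b2 0; [by left | right].
move: h1 h2; rewrite !mul0r => /esym/eqP + /eqP.
by rewrite !mulf_eq0 (negbTE b2_neq0) orbF => /eqP -> /eqP ->.
Qed.

Lemma commuting_offdiag_cases (R : idomainType) (a2 a3 d b2 b3 e : R) :
  a2 * b3 = a3 * b2 -> b2 * d = a2 * e -> a3 * e = b3 * d -> a2 * b2 * a3 * b3 = 0 ->
  [\/ [/\ a2 = 0, a3 = 0 & d = 0], [/\ b2 = 0, b3 = 0 & e = 0],
      a2 = 0 /\ b2 = 0 | a3 = 0 /\ b3 = 0].
Proof.
move=> h1 h2 h3 /eqP; rewrite !mulf_eq0 -!orbA => /or4P[] /eqP z.
- by case: (commuting_offdiag_zero z h1 h2) => [|[]]; constructor.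
- have h1' : b2 * a3 = b3 * a2 by rewrite mulrC -h1 mulrC.
  by case: (@commuting_offdiag_zero _ b2 b3 e a2 a3 d z h1' (esym h2)) => [|[]]; constructor.
- by case: (@commuting_offdiag_zero _ a3 a2 d b3 b2 e z (esym h1) (esym h3)) => [|[]];
    constructor.
- have h1' : b3 * a2 = b2 * a3 by rewrite mulrC h1 mulrC.
  by case: (@commuting_offdiag_zero _ b3 b2 e a3 a2 d z h1' h3) => [|[]]; constructor.
Qed.

Lemma mx2_scalar (R : nmodType) (A : 'M[R]_2) :
  A i0 i1 = 0 -> A i1 i0 = 0 -> A i0 i0 = A i1 i1 -> is_scalar_mx A.
Proof.
move=> a01 a10 a00; apply/is_scalar_mxP; exists (A i0 i0).
by apply/matrixP => i j; rewrite mxE; case: (ord2P i) (ord2P j) => -> [] ->.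
Qed.

Lemma mx2_eq (R : zmodType) (A B : 'M[R]_2) i j : i != j ->
  A i j = B i j -> A j i = B j i -> A i1 i1 = B i1 i1 ->
  A i0 i0 - A i1 i1 = B i0 i0 - B i1 i1 -> A = B.
Proof.
move=> ij aij aji a11 /eqP; rewrite a11 (can_eq (addrK _)) => /eqP a00.
apply/matrixP => r c; case: (ord2P r) (ord2P c) => -> [] ->; rewrite ?a00 ?a11 //;
  by case: (ord2P i) (ord2P j) ij aij aji => -> [] ->.
Qed.

Definition abs_code M (x : int) : 'I_M.+1 := inord `|x|.

Lemma abs_code_inj M (x y : int) : (`|x| <= M)%N -> (`|y| <= M)%N ->
  (x < 0) = (y < 0) -> abs_code M x = abs_code M y -> x = y.
Proof.
move=> xM yM xy_sign /(congr1 val); rewrite /= !inordK ?ltnS // => xy_abs.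
by rewrite (intEsign x) (intEsign y) xy_abs xy_sign.
Qed.

Section Codes.

Variable N : nat.
Local Notation code := 'I_(2 * N + 1).

Lemma ent_inj : injective (@ent N).
Proof. by move=> c c'; rewrite /ent => /eqP; rewrite (can_eq (addrK _)) => /eqP [] /val_inj. Qed.

Lemma toZ_inj : injective (@toZ N).
Proof.
move=> A B /matrixP AB; apply/matrixP => i j.
by apply: ent_inj; have := AB i j; rewrite !mxE.
Qed.

Lemma abs_ent_le (c : code) : (`|ent c| <= N)%N.
Proof. by have := ltn_ord c; rewrite /ent; lia. Qed.

Lemma N_lt_code_size : (N < 2 * N + 1)%N. Proof. lia. Qed.

Definition zero_code : code := Ordinal N_lt_code_size.
Lemma ent_zero_code : ent zero_code = 0.
Proof. by rewrite /ent subrr. Qed.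

Definition scalar_code (c : code) : 'M[code]_2 :=
  \matrix_(i, j) if i == j then c else zero_code.

Lemma toZ_scalar_code c : toZ (scalar_code c) = (ent c)%:M.
Proof.
apply/matrixP => i j; rewrite !mxE.
by case: eqP => _; rewrite ?mulr1n ?mulr0n ?ent_zero_code.
Qed.

Definition scalar_codes : {set 'M[code]_2} := [set A | is_scalar_mx (toZ A)].

Lemma scalar_codesE : scalar_codes = scalar_code @: setT.
Proof.
apply/setP => A; rewrite inE; apply/is_scalar_mxP/imsetP => [[a AE] | [c _ ->]].
  exists (A i0 i0) => //; apply: toZ_inj; rewrite toZ_scalar_code AE.
  by have := congr1 (fun M : 'M_2 => M i0 i0) AE; rewrite !mxE /= mulr1n => ->.
by exists (ent c); apply: toZ_scalar_code.
Qed.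

Lemma card_scalar_codes : #|scalar_codes| = (2 * N + 1)%N.
Proof.
rewrite scalar_codesE card_imset ?cardsT ?card_ord // => c c'.
by move/(congr1 (fun M : 'M_2 => M i0 i0)); rewrite !mxE.
Qed.

Lemma abs_toZ_le (A : 'M[code]_2) i j : (`|toZ A i j| <= N)%N.
Proof. by rewrite mxE abs_ent_le. Qed.

Lemma abs_toZ_sub_le (A : 'M[code]_2) i j k l : (`|toZ A i j - toZ A k l| <= 2 * N)%N.
Proof. by have := abs_toZ_le A i j; have := abs_toZ_le A k l; lia. Qed.

Lemma abs_toZ_le2 (A : 'M[code]_2) i j : (`|toZ A i j| <= 2 * N)%N.
Proof. by have := abs_toZ_le A i j; lia. Qed.

Local Notation pair := ('M[code]_2 * 'M[code]_2)%type.

Definition scalar_left : {set pair} := setX scalar_codes [set: 'M[code]_2].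
Definition scalar_right : {set pair} := setX [set: 'M[code]_2] scalar_codes.
Definition scalar_pairs : {set pair} := scalar_left :|: scalar_right.

Definition offdiag_vanishing (i j : 'I_2) : {set pair} :=
  [set p : pair | let A := toZ p.1 in let B := toZ p.2 in
    [&& A i j == 0, B i j == 0 &
        A j i * (B i0 i0 - B i1 i1) == B j i * (A i0 i0 - A i1 i1)]].

Lemma scalar_pairs_sub : scalar_pairs \subset GammaMinusGammaP N.
Proof.
apply/subsetP => -[A B] /setUP[] /setXP[]; rewrite !inE /=.
  by move=> /is_scalar_mxP[a ->] _; rewrite scalar_mxC eqxx mxE mulr0n !mul0r.
by move=> _ /is_scalar_mxP[b ->]; rewrite scalar_mxC eqxx [b%:M _ _]mxE mulr0n mulr0 !mul0r.
Qed.

Lemma GammaMinusGammaP_sub :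
  GammaMinusGammaP N \subset
    scalar_pairs :|: (offdiag_vanishing i0 i1 :|: offdiag_vanishing i1 i0).
Proof.
apply/subsetP => -[A B]; rewrite inE /= mx2_commE.
move=> /andP[/and3P[/eqP h1 /eqP h2 /eqP h3] /eqP h4]; rewrite !inE /=.
case: (commuting_offdiag_cases h1 h2 h3 h4)
  => [[a2 a3 /subr0_eq d] | [b2 b3 /subr0_eq e] | [a2 b2] | [a3 b3]].
- by rewrite (mx2_scalar a2 a3 d).
- by rewrite (mx2_scalar b2 b3 e) orbT.
- by rewrite a2 b2 h3 !eqxx !orbT.
- by rewrite a3 b3 h2 !eqxx !orbT.
Qed.

(* On [offdiag_vanishing i j] a pair is determined by these data, and the absolute values
   (x, y, z, w) satisfy x w = y z. *)
Definition offdiag_profile (i j : 'I_2) (p : pair) :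
    quad (2 * N) * ((bool * bool * bool * bool) * (code * code)) :=
  let A := toZ p.1 in let B := toZ p.2 in
  let d := A i0 i0 - A i1 i1 in let e := B i0 i0 - B i1 i1 in
  ((abs_code _ (A j i), abs_code _ (B j i), abs_code _ d, abs_code _ e),
   ((A j i < 0, B j i < 0, d < 0, e < 0), (p.1 i1 i1, p.2 i1 i1))).

Lemma offdiag_profile_inj i j : i != j ->
  {in offdiag_vanishing i j &, injective (offdiag_profile i j)}.
Proof.
move=> ij [A B] [A' B']; rewrite !inE /= => /and3P[/eqP a0 /eqP b0 _] /and3P[/eqP a0' /eqP b0' _].
case=> /abs_code_inj ea /abs_code_inj eb /abs_code_inj ed /abs_code_inj ee sa sb sd se a11 b11.
congr (_, _); apply: toZ_inj; apply: (mx2_eq ij).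
- by rewrite a0 a0'.
- exact: ea (abs_toZ_le2 _ _ _) (abs_toZ_le2 _ _ _) sa.
- by rewrite !mxE a11.
- exact: ed (abs_toZ_sub_le _ _ _ _ _) (abs_toZ_sub_le _ _ _ _ _) sd.
- by rewrite b0 b0'.
- exact: eb (abs_toZ_le2 _ _ _) (abs_toZ_le2 _ _ _) sb.
- by rewrite !mxE b11.
- exact: ee (abs_toZ_sub_le _ _ _ _ _) (abs_toZ_sub_le _ _ _ _ _) se.
Qed.

Lemma card_offdiag_vanishing i j : i != j ->
  (#|offdiag_vanishing i j| <= #|proportional_quads (2 * N)| * (16 * (2 * N + 1) ^ 2))%N.
Proof.
move=> ij; rewrite -(card_in_imset (offdiag_profile_inj ij)).
have -> : (16 * (2 * N + 1) ^ 2 = #|[set: (bool * bool * bool * bool) * (code * code)]|)%N.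
  by rewrite cardsT !card_prod card_bool card_ord mulnn.
rewrite -cardsX; apply/subset_leq_card/subsetP => _ /imsetP[[A B] + ->].
rewrite !inE /= => /and3P[_ _ /eqP rel].
by rewrite !inordK ?ltnS ?abs_toZ_sub_le ?abs_toZ_le2 // -!abszM rel eqxx.
Qed.

Lemma card_scalar_left : #|scalar_left| = ((2 * N + 1) ^ 5)%N.
Proof. by rewrite cardsX cardsT card_mx card_ord card_scalar_codes -expnS. Qed.

Lemma card_scalar_right : #|scalar_right| = ((2 * N + 1) ^ 5)%N.
Proof. by rewrite cardsX cardsT card_mx card_ord card_scalar_codes -expnSr. Qed.

Lemma card_GammaMinusGammaP_ge :
  (2 * (2 * N + 1) ^ 5 <= card_GammaMinusGammaP N + (2 * N + 1) ^ 2)%N.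
Proof.
have := cardsUI scalar_left scalar_right.
rewrite -/scalar_pairs card_scalar_left card_scalar_right.
have := subset_leq_card scalar_pairs_sub.
have : (#|scalar_left :&: scalar_right| <= (2 * N + 1) ^ 2)%N.
  apply: (@leq_trans #|setX scalar_codes scalar_codes|).
    apply/subset_leq_card/subsetP => -[A B].
    by rewrite !inE => /andP[/andP[-> _] /andP[_ ->]].
  by rewrite cardsX card_scalar_codes mulnn.
rewrite /card_GammaMinusGammaP; lia.
Qed.

Lemma card_GammaMinusGammaP_le :
  (card_GammaMinusGammaP N <=
     2 * (2 * N + 1) ^ 5 + 32 * (2 * N + 1) ^ 2 * ((2 * N + 1) ^ 2 + box_sum (2 * N)))%N.
Proof.
apply: leq_trans (subset_leq_card GammaMinusGammaP_sub) _.
apply: leq_trans (leq_card_setU _ _) _; apply: leq_add.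
  by apply: leq_trans (leq_card_setU _ _) _; rewrite card_scalar_left card_scalar_right; lia.
apply: leq_trans (leq_card_setU _ _) _.
have := card_offdiag_vanishing (i:=i0) (j:=i1) isT.
have := card_offdiag_vanishing (i:=i1) (j:=i0) isT.
have := leq_mul (card_proportional_quads (2 * N)) (leqnn (16 * (2 * N + 1) ^ 2)).
rewrite (_ : (2 * N).+1 ^ 2 = (2 * N + 1) ^ 2)%N; last by rewrite addn1.
lia.
Qed.

End Codes.
End Counting.

Module Asymptotics.
Import all_boot zify Rcomplements Counting.
Set Implicit Arguments. Unset Strict Implicit.
Local Open Scope R_scope.

Lemma ln_le_sub1 x : 0 < x -> ln x <= x - 1.
Proof. by move=> x_gt0; have := exp_ineq1_le (ln x); rewrite exp_ln //; lra. Qed.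

Lemma inv_succ_le_ln_succ y : 0 < y -> / (y + 1) <= ln (y + 1) - ln y.
Proof.
move=> y_gt0; have q_gt0 : 0 < y / (y + 1) by apply: Rdiv_lt_0_compat; lra.
have := ln_le_sub1 q_gt0; rewrite ln_div; [|lra|lra].
have -> : y / (y + 1) - 1 = - / (y + 1) by field; lra.
lra.
Qed.

Lemma INR_leq a b : (a <= b)%N -> INR a <= INR b.
Proof. by move/leP; apply: le_INR. Qed.

Lemma INR_expn a k : INR (a ^ k) = INR a ^ k.
Proof. by elim: k => [|k IH]; rewrite ?expn0 // expnS mult_INR IH. Qed.

Lemma sum_le_harmonic (f : nat -> nat) (c : R) n : (0 < n)%N ->
  (forall m, (0 < m <= n)%N -> INR (f m) <= c / INR m) ->
  INR (\sum_(1 <= m < n.+1) f m) <= c * (1 + ln (INR n)).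
Proof.
move=> n_gt0 f_le; have c_ge0 : 0 <= c.
  by have := f_le 1%N n_gt0; rewrite Rdiv_1_r; have := pos_INR (f 1%N); lra.
elim: n n_gt0 f_le => [//|[|n] IH] _ f_le.
  by rewrite big_nat1 ln_1; have := f_le 1%N isT; rewrite Rdiv_1_r; lra.
have ih : INR (\sum_(1 <= m < n.+2) f m) <= c * (1 + ln (INR n.+1)).
  by apply: IH => // m /andP[m_gt0 m_le]; apply: f_le; rewrite m_gt0 leqW.
have := f_le n.+2 (leqnn _); have := inv_succ_le_ln_succ (lt_0_INR _ (Nat.lt_0_succ n)).
rewrite big_nat_recr // plus_INR (S_INR n.+1) /Rdiv => /(Rmult_le_compat_l c _ _ c_ge0).
set S := \sum_(1 <= m < n.+2) f m in ih *.
lra.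
Qed.

Lemma box_sum_term_le M m : (0 < m <= M)%N ->
  (m * ((2 * m + 1) * (M %/ m).+1 ^ 2) <= 12 * M ^ 2)%N.
Proof.
move=> /andP[m_gt0 m_le]; rewrite !expnS !expn0 !muln1; set q := (M %/ m).+1.
have mq_le : (m * q <= 2 * M)%N by have := leq_divM M m; lia.
have : (m * q * (m * q) <= 2 * M * (2 * M))%N by apply: leq_mul.
have : (m * ((2 * m + 1) * (q * q)) <= m * (3 * m * (q * q)))%N.
  have three_m : (2 * m + 1 <= 3 * m)%N by lia.
  by rewrite leq_mul2l leq_mul2r three_m !orbT.
lia.
Qed.

Lemma box_sum_le M : (0 < M)%N ->
  INR (box_sum M) <= 1 + 12 * INR M ^ 2 * (1 + ln (INR M)).
Proof.
move=> M_gt0.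
rewrite /box_sum -(big_mkord xpredT (fun m => (2 * m + 1) * (M %/ m).+1 ^ 2)%N) big_ltn //.
rewrite plus_INR divn0 muln0 add0n mul1n exp1n INR_1.
apply/Rplus_le_compat_l/sum_le_harmonic => // m m_range.
have m_gt0 : 0 < INR m by apply/lt_0_INR/ltP; case/andP: m_range.
apply/Rle_div_r => //; rewrite Rmult_comm.
have -> : 12 = INR 12 by rewrite INR_IZR_INZ.
by have := INR_leq (box_sum_term_le m_range); rewrite !mult_INR; lra.
Qed.

Lemma INR_2 : INR 2 = 2.
Proof. by rewrite INR_IZR_INZ. Qed.

Lemma INR_double N : INR (2 * N) = 2 * INR N.
Proof. by rewrite mult_INR INR_2. Qed.

Lemma INR_code_size N : INR (2 * N + 1) = 2 * INR N + 1.
Proof. by rewrite plus_INR INR_double. Qed.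

Lemma ln_ge1 x : 3 <= x -> 1 <= ln x.
Proof.
by move=> x_ge3; rewrite -(ln_exp 1); apply: ln_le; [apply: exp_pos | have := exp_le_3; lra].
Qed.

Lemma card_excess_estimate (n c s : R) : 3 <= n -> 0 <= s ->
  c <= 2 * (2 * n + 1) ^ 5 + 32 * (2 * n + 1) ^ 2 * ((2 * n + 1) ^ 2 + s) ->
  s <= 1 + 12 * (2 * n) ^ 2 * (1 + ln (2 * n)) ->
  c - 2 * (2 * n) ^ 5 <= 45000 * n ^ 4 * ln n.
Proof.
move=> n_ge3 s_ge0 c_le s_le.
have L_ge1 := ln_ge1 n_ge3.
have ln2n_le : 1 + ln (2 * n) <= 3 * ln n.
  have ln2_le : ln 2 <= ln n by apply: ln_le; lra.
  rewrite ln_mult; lra.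
have n2_ge0 : 0 <= n ^ 2 by apply: pow2_ge_0.
have s_le' : s <= 145 * n ^ 2 * ln n by nra.
have K2_le : (2 * n + 1) ^ 2 <= 9 * n ^ 2 * ln n by nra.
have prod_le :
    32 * (2 * n + 1) ^ 2 * ((2 * n + 1) ^ 2 + s) <= 32 * (9 * n ^ 2) * (154 * n ^ 2 * ln n).
  by apply: Rmult_le_compat; nra.
have n4_ge0 : 0 <= n ^ 4 by apply: pow_le; lra.
have n3_ge0 : 0 <= n ^ 3 by apply: pow_le; lra.
have poly_le : 2 * (2 * n + 1) ^ 5 - 2 * (2 * n) ^ 5 <= 422 * n ^ 4 * ln n by nra.
have : 0 <= n ^ 4 * ln n by apply: Rmult_le_pos; lra.
lra.
Qed.

Lemma card_GammaMinusGammaP_ge_R N : 2 * (2 * INR N) ^ 5 <= INR (card_GammaMinusGammaP N).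
Proof.
have := INR_leq (card_GammaMinusGammaP_ge N).
rewrite (mult_INR 2) plus_INR !INR_expn INR_code_size INR_2.
have n_ge0 := pos_INR N; have := pow_le _ 3 n_ge0; have := pow_le _ 4 n_ge0.
nra.
Qed.

Lemma card_GammaMinusGammaP_le_R N :
  INR (card_GammaMinusGammaP N) <=
    2 * (2 * INR N + 1) ^ 5 +
    32 * (2 * INR N + 1) ^ 2 * ((2 * INR N + 1) ^ 2 + INR (box_sum (2 * N))).
Proof.
have := INR_leq (card_GammaMinusGammaP_le N).
rewrite (plus_INR (2 * _)) (mult_INR 2) (mult_INR (32 * _)) (mult_INR 32) plus_INR.
by rewrite !INR_expn INR_code_size INR_2 (_ : INR 32 = 32) // INR_IZR_INZ.
Qed.

Lemma card_GammaMinusGammaP_asymptotics N : (3 <= N)%coq_nat ->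
  Rabs (INR (card_GammaMinusGammaP N) - 2 * (2 * INR N) ^ 5)
    <= 45000 * INR N ^ 4 * ln (INR N).
Proof.
move=> N_ge3; have n_ge3 : 3 <= INR N.
  by rewrite (_ : 3 = INR 3); [apply: le_INR | rewrite INR_IZR_INZ].
have N2_gt0 : (0 < 2 * N)%N by lia.
have := box_sum_le N2_gt0; rewrite INR_double.
move/(card_excess_estimate n_ge3 (pos_INR _) (card_GammaMinusGammaP_le_R N)).
have := card_GammaMinusGammaP_ge_R N.
have : 0 <= INR N ^ 4 * ln (INR N).
  by apply: Rmult_le_pos; [apply: pow_le | have := ln_ge1 n_ge3]; lra.
move=> ? ? ?; apply: Rabs_le; lra.
Qed.

End Asymptotics.

Local Open Scope R_scope.

Theorem proposition2p3 :
  exists (C : R) (N0 : nat), (1 <= N0)%nat /\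
    forall N : nat, (N0 <= N)%nat ->
      Rabs (INR (card_GammaMinusGammaP N) - 2 * (2 * INR N) ^ 5)
        <= C * INR N ^ 4 * ln (INR N).
Proof.
exists 45000, 3%nat; split; [auto with arith |].
exact Asymptotics.card_GammaMinusGammaP_asymptotics.
Qed.
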